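(* Let $A\in\mathbb{R}^{n\times n}$, $B\in\mathbb{R}^{n\times m}$, $C\in\mathbb{R}^{p\times n}$, $E\in\mathbb{R}^{n\times p}$, let $\Theta\subset\mathbb{R}^p$ be a convex compact set, let $w:[0,T]\to\mathbb{R}^m$ be integrable, and let $x(0)\in\mathbb{R}^n$ be fixed, where $T>0$. For $z_0\in\mathbb{R}^p$ let $x^{z_0}$ denote the solution on $[0,T]$ of $\dot{x}=Ax+Bw+Ez_0$ with initial value $x(0)$, and define the set of $T$-stationary initial conditions $$\mathfrak{R}(T):=\{z_0\in\mathbb{R}^p:\ z_0\in Cx^{z_0}(t)+\Theta\ \text{for all } t\in[0,T]\}.$$ Let $\Psi$ be the entire function $\Psi(u)=\int_0^1 e^{uv}\,dv$ (equal to $1$ at $u=0$ and $(e^u-1)/u$ otherwise), extended to square matrices via its power series, and set $$\Phi(t):=I_p-tC\Psi(tA)E\in\mathbb{R}^{p\times p}.$$ Suppose $\Phi(t)$ is nonsingular for all $t\in[0,T]$. Then $$\mathfrak{R}(T)=\bigcap_{0\le t\le T}\Phi(t)^{-1}\big(Cx_*(t)+\Theta\big),$$ where $x_*(t):=e^{tA}x(0)+\int_0^t e^{(t-s)A}Bw(s)\,ds$ is the solution of $\dot x=Ax+Bw$ with initial value $x(0)$.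
   Context: For a set $K\subset\mathbb{R}^p$ and a vector $c$, $c+K=\{c+k:k\in K\}$, and $M^{-1}(K)=\{M^{-1}k: k\in K\}$ for invertible $M$. The set $\mathfrak{R}(T)$ consists of those initial backlash outputs $z_0$ which, if held constant over $[0,T]$ as the feedback input of the linear system, always remain in $Cx(t)+\Theta$ (i.e. the backlash output stays at rest on $[0,T]$). *)

From HB Require Import structures.
From mathcomp Require Import all_boot all_order all_algebra.
From mathcomp Require Import all_classical all_reals all_analysis.
Set Implicit Arguments. Unset Strict Implicit. Unset Printing Implicit Defensive.
Import Order.TTheory GRing.Theory Num.Theory.
Import numFieldNormedType.Exports.
Local Open Scope classical_set_scope.
Local Open Scope ring_scope.

Section Defs.
Variable R : realType.

Definition mxpow (n : nat) (M : 'M[R]_n) (k : nat) : 'M[R]_n :=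
  iter k (mulmx M) 1%:M.

Definition expm (n : nat) (M : 'M[R]_n) : 'M[R]_n :=
  \matrix_(i, j) limn (fun N => \sum_(k < N) (mxpow M k i j / (k`!)%:R)).

(* Psi(M) = sum_k M^k / (k+1)!, the power-series extension of
   Psi(u) = int_0^1 e^{uv} dv to square matrices. *)
Definition Psim (n : nat) (M : 'M[R]_n) : 'M[R]_n :=
  \matrix_(i, j) limn (fun N => \sum_(k < N) (mxpow M k i j / (k.+1`!)%:R)).

Definition cv_integral (k : nat) (t : R) (f : R -> 'cV[R]_k) : 'cV[R]_k :=
  \col_i (\int[lebesgue_measure]_(s in `[0, t]) f s i 0).

Definition translate (p : nat) (c : 'cV[R]_p) (K : set 'cV[R]_p) : set 'cV[R]_p :=
  [set c + k | k in K].

Definition inv_image (p : nat) (M : 'M[R]_p) (K : set 'cV[R]_p) : set 'cV[R]_p :=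
  [set invmx M *m k | k in K].

(* Solution on [0,T] of x' = A x + B w + E z0, x(0) = x0
   (variation-of-constants / Caratheodory solution). *)
Definition sol_z (n m p : nat) (A : 'M[R]_n) (B : 'M[R]_(n, m)) (E : 'M[R]_(n, p))
  (w : R -> 'cV[R]_m) (x0 : 'cV[R]_n) (z0 : 'cV[R]_p) (t : R) : 'cV[R]_n :=
  expm (t *: A) *m x0 +
  cv_integral t (fun s => expm ((t - s) *: A) *m (B *m w s + E *m z0)).

Definition sol_star (n m : nat) (A : 'M[R]_n) (B : 'M[R]_(n, m))
  (w : R -> 'cV[R]_m) (x0 : 'cV[R]_n) (t : R) : 'cV[R]_n :=
  expm (t *: A) *m x0 + cv_integral t (fun s => expm ((t - s) *: A) *m (B *m w s)).

Definition stationary_set (n m p : nat) (A : 'M[R]_n) (B : 'M[R]_(n, m))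
  (C : 'M[R]_(p, n)) (E : 'M[R]_(n, p)) (Theta : set 'cV[R]_p)
  (w : R -> 'cV[R]_m) (x0 : 'cV[R]_n) (T : R) : set 'cV[R]_p :=
  [set z0 | forall t, 0 <= t <= T ->
     translate (C *m sol_z A B E w x0 z0 t) Theta z0].

Definition Phi (n p : nat) (A : 'M[R]_n) (C : 'M[R]_(p, n)) (E : 'M[R]_(n, p))
  (t : R) : 'M[R]_p :=
  1%:M - t *: (C *m Psim (t *: A) *m E).

End Defs.

(** By variation of constants, the constant input [E z0] contributes
    [(\int_0^t e^((t-s)A) ds) E z0] to [x^z0(t)], and this integral is [t Psi(tA)]:
    entrywise, [e^(uA)] is a power series [sum_k a_k u^k / k!] with [|a_k| <= c^k],
    whose primitive vanishing at [0] is [u sum_k a_k u^k / (k+1)!].  Hence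
    [C x^z0(t) = C x_*(t) + (I - Phi(t)) z0], so [z0 \in C x^z0(t) + Theta] iff
    [Phi(t) z0 \in C x_*(t) + Theta]. *)

From HB Require Import structures.
From mathcomp Require Import all_boot all_order all_algebra.
From mathcomp Require Import all_classical all_reals all_analysis.
From mathcomp Require Import measurable_realfun ring.
Set Implicit Arguments. Unset Strict Implicit. Unset Printing Implicit Defensive.
Import Order.TTheory GRing.Theory Num.Theory.
Import numFieldNormedType.Exports.
Local Open Scope classical_set_scope.
Local Open Scope ring_scope.

Section exp_dominated_pseries.
Variable R : realType.
Implicit Types (b : R^nat) (D c x : R).

Definition exp_dominated b D c := forall k, `|b k| <= D * c ^+ k / k`!%:R.

Lemma is_cvg_pseries_exp_dominated b D c x : 0 <= D -> 0 <= c ->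
  exp_dominated b D c -> cvgn (pseries b x).
Proof.
move=> D0 c0 hb; apply: (@normed_cvg R R^o).
apply: (@series_le_cvg _ _ (D *: exp_coeff (c * `|x|))) => [k|k|k|].
- exact: normr_ge0.
- by rewrite /= mulr_ge0 // exp_coeff_ge0 // mulr_ge0.
- rewrite /= normrM normrX.
  apply: le_trans (ler_wpM2r (exprn_ge0 _ (normr_ge0 x)) (hb k)) _.
  have -> : (D *: exp_coeff (c * `|x|)) k = D * exp_coeff (c * `|x|) k by [].
  by rewrite /exp_coeff /= exprMn le_eqVlt; apply/orP; left; apply/eqP; ring.
- exact/is_cvg_seriesZ/is_cvg_series_exp_coeff.
Qed.

Lemma exp_dominated_pseries_diffs b D c : 0 <= c ->
  exp_dominated b D c -> exp_dominated (pseries_diffs b) (D * c) c.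
Proof.
move=> c0 hb k; rewrite /pseries_diffs normrM normr_nat.
apply: le_trans (ler_wpM2l (ler0n _ _) (hb k.+1)) _.
rewrite factS natrM exprS le_eqVlt; apply/orP; left; apply/eqP.
by field; rewrite nat1r !pnatr_eq0 -lt0n fact_gt0.
Qed.

Lemma is_derive_pseries_exp_dominated b D c x : 0 <= D -> 0 <= c ->
  exp_dominated b D c ->
  is_derive x 1 (fun y => limn (pseries b y)) (limn (pseries (pseries_diffs b) x)).
Proof.
move=> D0 c0 hb; have Dc0 := mulr_ge0 D0 c0.
have hb' := exp_dominated_pseries_diffs c0 hb.
apply: (@pseries_snd_diffs _ _ (`|x| + 1)).
- exact: is_cvg_pseries_exp_dominated _ D0 c0 hb.
- exact: is_cvg_pseries_exp_dominated _ Dc0 c0 hb'.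
- exact: is_cvg_pseries_exp_dominated _ (mulr_ge0 Dc0 c0) c0
    (exp_dominated_pseries_diffs c0 hb').
- by rewrite [ `|_ + 1| ]ger0_norm ?ltrDl // addr_ge0.
Qed.

End exp_dominated_pseries.

Section exponential_generating_function.
Variables (R : realType) (a : R^nat) (c : R).
Hypotheses (c_ge1 : 1 <= c) (a_le : forall k, `|a k| <= c ^+ k).

Definition egf u := limn (pseries (fun k => a k / k`!%:R) u).

Definition egf_psi u := limn (pseries (fun k => a k / k.+1`!%:R) u).

Let prim_coef k := if k is k'.+1 then a k' / k`!%:R else 0.
Let prim u := limn (pseries prim_coef u).

Let c_ge0 : 0 <= c. Proof. exact: le_trans c_ge1. Qed.

Let egf_dominated : exp_dominated (fun k => a k / k`!%:R) 1 c.
Proof. by move=> k; rewrite normrM normfV normr_nat mul1r ler_wpM2r. Qed.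

Let psi_dominated : exp_dominated (fun k => a k / k.+1`!%:R) 1 c.
Proof.
move=> k; rewrite normrM normfV normr_nat mul1r.
apply: ler_pM => //; rewrite lef_pV2 ?posrE ?ltr0n ?fact_gt0 //.
by rewrite ler_nat factS leq_pmull.
Qed.

Let prim_dominated : exp_dominated prim_coef 1 c.
Proof.
case=> [|k] /=; first by rewrite normr0 mul1r divr_ge0 ?exprn_ge0.
rewrite normrM normfV normr_nat mul1r ler_wpM2r // exprS.
by apply: le_trans (a_le k) _; rewrite ler_peMl // exprn_ge0.
Qed.

Let pseries_diffs_prim_coef :
  pseries_diffs prim_coef = (fun k => a k / k`!%:R).
Proof.
apply/funext => k; rewrite /pseries_diffs /prim_coef factS natrM.
by rewrite mulrCA invfM mulVKf // pnatr_eq0.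
Qed.

Let is_derive_prim (x : R) : is_derive x 1 prim (egf x).
Proof.
rewrite /egf -pseries_diffs_prim_coef.
exact: is_derive_pseries_exp_dominated x ler01 c_ge0 prim_dominated.
Qed.

Let primE (u : R) : prim u = u * egf_psi u.
Proof.
apply: cvg_lim => //; rewrite -cvg_shiftS.
have -> : (fun N => pseries prim_coef u N.+1) =
    (fun N => u * pseries (fun k => a k / k.+1`!%:R) u N).
  apply/funext => N; rewrite /pseries /series /= big_nat_recl //= mul0r add0r.
  by rewrite big_distrr; apply: eq_bigr => k _ /=; rewrite exprS; ring.
apply: cvgMl_tmp; exact: is_cvg_pseries_exp_dominated _ ler01 c_ge0 psi_dominated.
Qed.

Lemma continuous_egf : continuous egf.
Proof.
move=> x; apply: differentiable_continuous; apply/derivable1_diffP.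
by have [] := is_derive_pseries_exp_dominated x ler01 c_ge0 egf_dominated.
Qed.

Lemma integral_egf_rev t : 0 <= t ->
  \int[lebesgue_measure]_(s in `[0, t]) egf (t - s) = t * egf_psi t.
Proof.
rewrite le_eqVlt => /orP[/eqP <-|t_gt0].
  by rewrite set_itv1 Rintegral_set1 mul0r.
pose F s := - prim (t - s).
have F'E (s : R) : is_derive s 1 F (egf (t - s)).
  have := @is_derive1_comp _ prim (fun s => t - s) s _ _ (is_derive_prim (t - s))
    (is_deriveB (is_derive_cst t s 1) (is_derive_id s 1)).
  by move=> /is_deriveN; rewrite sub0r mulrN1 opprK.
have cF : continuous F.
  move=> s; apply: differentiable_continuous; apply/derivable1_diffP.
  by case: (F'E s).
rewrite /Rintegral (@continuous_FTC2 _ _ F) //.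
- by rewrite /F subrr subr0 -EFinB /= !primE mul0r oppr0 sub0r opprK.
- apply: continuous_subspaceT => s.
  apply: continuous_comp; last exact: continuous_egf.
  by apply: cvgB; [exact: cvg_cst | exact: cvg_id].
- split; first by move=> s _; case: (F'E s).
  + exact/cvg_at_right_filter/cF.
  + exact/cvg_at_left_filter/cF.
- by move=> s _; rewrite derive1E; apply: derive_val.
Qed.

End exponential_generating_function.

Section matrix_exponential.
Variables (R : realType) (n : nat) (A : 'M[R]_n).

Lemma mxpowZ (u : R) k : mxpow (u *: A) k = u ^+ k *: mxpow A k.
Proof.
elim: k => [|k IHk]; first by rewrite expr0 scale1r.
by rewrite [LHS]/= IHk -scalemxAl -scalemxAr scalerA exprS.
Qed.

Let c := 1 + \sum_i \sum_j `|A i j|.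

Let c_ge1 : 1 <= c.
Proof. by rewrite lerDl; do 2!apply: sumr_ge0 => ? _. Qed.

Lemma mxpow_entry_le k i j : `|mxpow A k i j| <= c ^+ k.
Proof.
have c_ge0 : 0 <= c := le_trans ler01 c_ge1.
elim: k i j => [|k IHk] i j.
  by rewrite /mxpow /= mxE expr0; case: (i == j); rewrite /= ?normr1 ?normr0.
rewrite /mxpow /= mxE exprS (le_trans (ler_norm_sum _ _ _)) //.
apply: (@le_trans _ _ (\sum_l `|A i l| * c ^+ k)).
  by apply: ler_sum => l _; rewrite normrM ler_wpM2l.
rewrite -mulr_suml ler_wpM2r ?exprn_ge0 // /c [in leRHS](bigD1 i) //= addrCA lerDl.
by rewrite addr_ge0 //; do 2!apply: sumr_ge0 => ? _.
Qed.

Lemma expmZ_entry (u : R) i j :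
  expm (u *: A) i j = egf (fun k => mxpow A k i j) u.
Proof.
rewrite mxE; congr (limn _); apply/funext => N.
rewrite /pseries /series /= big_mkord; apply: eq_bigr => k _.
by rewrite mxpowZ mxE; ring.
Qed.

Lemma PsimZ_entry (u : R) i j :
  Psim (u *: A) i j = egf_psi (fun k => mxpow A k i j) u.
Proof.
rewrite mxE; congr (limn _); apply/funext => N.
rewrite /pseries /series /= big_mkord; apply: eq_bigr => k _.
by rewrite mxpowZ mxE; ring.
Qed.

Lemma continuous_expm_rev (t : R) i j :
  continuous (fun s => expm ((t - s) *: A) i j).
Proof.
under eq_fun do rewrite expmZ_entry.
move=> s; apply: continuous_comp.
  by apply: cvgB; [exact: cvg_cst | exact: cvg_id].
exact: continuous_egf c_ge1 (fun k => mxpow_entry_le k i j) (t - s).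
Qed.

Lemma integral_expm_rev (t : R) i j : 0 <= t ->
  \int[lebesgue_measure]_(s in `[0, t]) expm ((t - s) *: A) i j =
  t * Psim (t *: A) i j.
Proof.
move=> t_ge0; under eq_Rintegral do rewrite expmZ_entry.
by rewrite PsimZ_entry (integral_egf_rev c_ge1 (fun k => mxpow_entry_le k i j)).
Qed.

End matrix_exponential.

(* [R] carries the sigma-algebra of [measurableTypeR R] under another display,
   so the identity transports integrability. *)
Lemma integrable_lebesgue_measureR (R : realType) (D : set R) (f : R -> \bar R) :
  measurable D -> (lebesgue_measure : set R -> \bar R).-integrable D f ->
  (@lebesgue_measure R).-integrable D f.
Proof.
move=> mD /integrableP[mf fi]; apply/integrableP; split; first exact: mf.
have mid : measurable_fun [set: measurableTypeR R] (id : _ -> R).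
  by move=> _ A mA; rewrite setTI.
have <- // : (\int[lebesgue_measure : set R -> \bar R]_(x in D) `|f x| =
    \int[@lebesgue_measure R]_(x in D) `|f x|)%E.
apply: (ge0_integral_pushforward mid) => //.
exact: measurableT_comp (@abse_measurable R setT) mf.
Qed.

Section Rintegral_sum.
Context d (T : measurableType d) (R : realType) (mu : {measure set T -> \bar R}).
Variables (D : set T) (I : Type) (s : seq I) (f : I -> T -> R).
Hypotheses (mD : measurable D) (intf : forall i, mu.-integrable D (EFin \o f i)).

Lemma integrable_Rsum : mu.-integrable D (EFin \o fun x => \sum_(i <- s) f i x).
Proof.
have := @integrable_sum _ _ _ mu _ mD _ s xpredT _ (fun i _ => intf i).
by apply: eq_integrable => // x _; rewrite /= sumEFin.
Qed.

Lemma Rintegral_sum :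
  \int[mu]_(x in D) \sum_(i <- s) f i x = \sum_(i <- s) \int[mu]_(x in D) f i x.
Proof.
rewrite /Rintegral (eq_integral (fun x => \sum_(i <- s) (f i x)%:E)).
  rewrite integral_sum // -sum_fine // => i _.
  exact (integrable_fin_num mD (intf i)).
by move=> x _; rewrite sumEFin.
Qed.

End Rintegral_sum.

Section column_integral.
Variables (R : realType) (t : R).
Local Notation mu := (@lebesgue_measure R).

Definition cv_integrable k (f : R -> 'cV[R]_k) :=
  forall i, mu.-integrable `[0, t] (fun s => (f s i 0)%:E).

Let mI : measurable (`[0, t] : set (measurableTypeR R)).
Proof. exact: measurable_itv. Qed.

Lemma bounded_continuous_itv (f : R -> R) : continuous f ->
  [bounded f x | x in `[0, t]].
Proof.
have It : compact (`[0, t] : set R) by exact: segment_compact.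
move=> cf; have := compact_bounded
  (continuous_compact (continuous_subspaceT cf) It).
by rewrite /bounded_near /=; apply: filterS => M HM x Ix; apply: HM; exists x.
Qed.

Lemma integrable_continuous_itv (f : R -> R) : continuous f ->
  mu.-integrable `[0, t] (EFin \o f).
Proof.
move=> cf; apply: continuous_compact_integrable; first exact: segment_compact.
exact: continuous_subspaceT.
Qed.

Lemma cv_integrable_cst k (v : 'cV[R]_k) : cv_integrable (fun=> v).
Proof. by move=> i; exact: (integrable_continuous_itv (fun=> cvg_cst (v i 0))). Qed.

Lemma cv_integrable_mulmx k l (M : R -> 'M[R]_(k, l)) (v : R -> 'cV[R]_l) :
  (forall i j, continuous (fun s => M s i j)) -> cv_integrable v ->
  cv_integrable (fun s => M s *m v s).
Proof.
move=> cM iv i.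
have -> : (fun s => ((M s *m v s) i 0)%:E) =
    EFin \o fun s => \sum_j M s i j * v s j 0.
  by apply/funext => s; rewrite /= mxE.
apply: integrable_Rsum => // j.
have mM : measurable_fun (`[0, t] : set (measurableTypeR R)) (fun s => M s i j).
  exact: measurable_funS (continuous_measurable_fun (cM i j)).
have := integrableMr mI mM (bounded_continuous_itv (cM i j)) (iv j).
by apply: eq_integrable => // s _; rewrite /= EFinM.
Qed.

Lemma cv_integralD k (f g : R -> 'cV[R]_k) :
  cv_integrable f -> cv_integrable g ->
  cv_integral t (fun s => f s + g s) = cv_integral t f + cv_integral t g.
Proof.
move=> intf intg; apply/matrixP => i j; rewrite (ord1 j) !mxE.
under eq_Rintegral do rewrite mxE.
exact: (RintegralD mI (intf i) (intg i)).
Qed.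

Lemma cv_integral_mulmx_cst k l (M : R -> 'M[R]_(k, l)) (v : 'cV[R]_l) :
  (forall i j, continuous (fun s => M s i j)) ->
  cv_integral t (fun s => M s *m v) =
  (\matrix_(i, j) \int[mu]_(s in `[0, t]) M s i j) *m v.
Proof.
move=> cM; apply/matrixP => i j; rewrite (ord1 j) !mxE.
under eq_Rintegral do rewrite mxE.
rewrite Rintegral_sum //; last first.
  move=> q; apply: integrable_continuous_itv => s.
  by apply: cvgM; [exact: cM | exact: cvg_cst].
apply: eq_bigr => q _; rewrite mxE RintegralZr //.
exact: integrable_continuous_itv.
Qed.

End column_integral.

Lemma cv_integrableS (R : realType) (t T : R) k (f : R -> 'cV[R]_k) :
  t <= T -> cv_integrable T f -> cv_integrable t f.
Proof.
move=> tT intf i.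
have mI (r : R) : measurable (`[0, r] : set (measurableTypeR R)).
  exact: measurable_itv.
apply: (integrableS (mI T) (mI t) _ (intf i)).
by move=> s /=; rewrite !in_itv /= => /andP[-> st]; exact: le_trans st tT.
Qed.

Section variation_of_constants.
Variables (R : realType) (n m p : nat) (A : 'M[R]_n) (B : 'M[R]_(n, m))
  (C : 'M[R]_(p, n)) (E : 'M[R]_(n, p)) (w : R -> 'cV[R]_m) (x0 : 'cV[R]_n).

Lemma cv_integral_expm_cst (t : R) (v : 'cV[R]_n) : 0 <= t ->
  cv_integral t (fun s => expm ((t - s) *: A) *m v) = t *: Psim (t *: A) *m v.
Proof.
move=> t_ge0; rewrite cv_integral_mulmx_cst; last exact: continuous_expm_rev.
by congr (_ *m _); apply/matrixP => i j; rewrite mxE [RHS]mxE integral_expm_rev.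
Qed.

Lemma sol_zE (z0 : 'cV[R]_p) (t : R) : 0 <= t -> cv_integrable t w ->
  sol_z A B E w x0 z0 t = sol_star A B w x0 t + t *: Psim (t *: A) *m (E *m z0).
Proof.
move=> t_ge0 intw; rewrite /sol_z /sol_star -addrA -cv_integral_expm_cst //.
under eq_fun do rewrite mulmxDr.
have cM i j : continuous (fun s => expm ((t - s) *: A) i j).
  exact: continuous_expm_rev.
rewrite cv_integralD //; apply: cv_integrable_mulmx => //.
- by apply: (cv_integrable_mulmx (M := fun=> B)) => // i j s; exact: cvg_cst.
- exact: cv_integrable_cst.
Qed.

Lemma mulmx_sol_zE (z0 : 'cV[R]_p) (t : R) : 0 <= t -> cv_integrable t w ->
  C *m sol_z A B E w x0 z0 t = C *m sol_star A B w x0 t + (1%:M - Phi A C E t) *m z0.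
Proof.
move=> t_ge0 intw; rewrite sol_zE // mulmxDr.
have -> : 1%:M - Phi A C E t = t *: (C *m Psim (t *: A) *m E).
  by rewrite /Phi opprB addrC subrK.
by rewrite !mulmxA -scalemxAr -!scalemxAl.
Qed.

End variation_of_constants.

Lemma translateD (R : realType) p (c d z : 'cV[R]_p) (K : set 'cV[R]_p) :
  translate (c + d) K z <-> translate c K (z - d).
Proof.
split=> [[k Kk <-]|[k Kk ckE]]; exists k => //; first by rewrite addrAC addrK.
by rewrite addrAC ckE subrK.
Qed.

Lemma inv_imageP (R : realType) p (P : 'M[R]_p) (X : set 'cV[R]_p) (z : 'cV[R]_p) :
  P \in unitmx -> inv_image P X z <-> X (P *m z).
Proof.
move=> Pu; split=> [[y Xy <-]|Xz]; first by rewrite mulKVmx.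
by exists (P *m z); rewrite ?mulKmx.
Qed.

Theorem theorem1 (R : realType) (n m p : nat)
  (A : 'M[R]_n) (B : 'M[R]_(n, m)) (C : 'M[R]_(p, n)) (E : 'M[R]_(n, p))
  (Theta : set 'cV[R]_p) (w : R -> 'cV[R]_m) (x0 : 'cV[R]_n) (T : R) :
  0 < T ->
  convex_set Theta -> compact Theta ->
  (forall i, (lebesgue_measure : set R -> \bar R).-integrable `[0, T]
               (fun s => (w s i 0)%:E)) ->
  (forall t, 0 <= t <= T -> Phi A C E t \in unitmx) ->
  stationary_set A B C E Theta w x0 T =
  \bigcap_(t in [set t : R | 0 <= t <= T])
     inv_image (Phi A C E t) (translate (C *m sol_star A B w x0 t) Theta).
Proof.
move=> _ _ _ hw hPhi.
have intw t : t <= T -> cv_integrable t w.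
  move=> tT; apply: cv_integrableS tT _ => i.
  by apply: integrable_lebesgue_measureR (hw i); exact: measurable_itv.
have stationary_atE t z0 : 0 <= t <= T ->
    translate (C *m sol_z A B E w x0 z0 t) Theta z0 <->
    inv_image (Phi A C E t) (translate (C *m sol_star A B w x0 t) Theta) z0.
  move=> /[dup] /andP[t_ge0 tT] /hPhi Phi_unit.
  have PhiE : z0 - (1%:M - Phi A C E t) *m z0 = Phi A C E t *m z0.
    by rewrite mulmxBl mul1mx opprB addrC subrK.
  rewrite mulmx_sol_zE //; last exact: intw.
  apply: iff_trans; first exact: translateD.
  by rewrite PhiE; symmetry; exact: inv_imageP.
by apply/seteqP; split=> z0 hz t ht; apply/stationary_atE => //; exact: hz.
Qed.
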